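(* Let $k\ge1$ and $b_1,\dots,b_k\in\mathbb{F}_q$, and set $(a_1,\dots,a_k):=G(b_1,\dots,b_k)$. Then, as permutations of $\mathbb{P}^1(\mathbb{F}_q)$, $$(b_1,\infty)\circ(b_2,\infty)\circ\cdots\circ(b_k,\infty)=\mu(x)\circ x^{q-2}\circ(x-a_k)\circ x^{q-2}\circ(x-a_{k-1})\circ\cdots\circ x^{q-2}\circ(x-a_1),$$ where $\mu(x):=(x+a_1)\circ x^{-1}\circ(x+a_2)\circ x^{-1}\circ\cdots\circ(x+a_k)\circ x^{-1}$, which is a degree-one rational function in $\mathbb{F}_q(x)$.
   Context: Let $q>2$ be a prime power, $\mathbb{F}_q$ the field with $q$ elements, $\mathbb{P}^1(\mathbb{F}_q)=\mathbb{F}_q\cup\{\infty\}$. Degree-one rational functions in $\mathbb{F}_q(x)$ act on $\mathbb{P}^1(\mathbb{F}_q)$ with the usual conventions (e.g. $x^{-1}$ swaps $0$ and $\infty$, polynomials fix $\infty$). $x^{q-2}$ acts on $\mathbb{P}^1(\mathbb{F}_q)$ by fixing $0$ and $\infty$ and sending $c\in\mathbb{F}_q^*$ to $c^{q-2}=c^{-1}$; for $c\in\mathbb{F}_q$, $c^{q-2}$ also denotes the field element ($0^{q-2}=0$). For $b\in\mathbb{F}_q$, $(b,\infty)$ is the transposition swapping $b$ and $\infty$. Composition is $(f\circ g)(x)=f(g(x))$. For $2\le\ell\le k$ let $\Phi_\ell:\mathbb{F}_q^\ell\to\mathbb{F}_q^{\ell-1}$ send $(e_1,\dots,e_\ell)$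 to $((e_2-e_1)^{q-2},(e_3-e_1)^{q-2},\dots,(e_\ell-e_1)^{q-2})$. The map $G:\mathbb{F}_q^k\to\mathbb{F}_q^k$ sends $(b_1,\dots,b_k)$ to $(a_1,\dots,a_k)$ where $a_i$ is the first entry of $\Phi_{k-i+2}\circ\Phi_{k-i+3}\circ\cdots\circ\Phi_k(b_1,\dots,b_k)\in\mathbb{F}_q^{k-i+1}$ (for $i=1$ this composite is the identity, so $a_1=b_1$). *)

From HB Require Import structures.
From mathcomp Require Import all_boot all_order all_algebra.
Set Implicit Arguments. Unset Strict Implicit. Unset Printing Implicit Defensive.
Import GRing.Theory.
Local Open Scope ring_scope.

(* P^1(F) is modelled as option F : [None] is the point at infinity. *)
Definition P1 (F : finFieldType) := option F.

Section Defs.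
Variable F : finFieldType.

Definition qF : nat := #|F|.

Definition transpInf (b : F) (x : P1 F) : P1 F :=
  match x with
  | None => Some b
  | Some c => if c == b then None else Some c
  end.

Definition addP (a : F) (x : P1 F) : P1 F :=
  match x with None => None | Some c => Some (c + a) end.

Definition subP (a : F) (x : P1 F) : P1 F :=
  match x with None => None | Some c => Some (c - a) end.

Definition powq2 (x : P1 F) : P1 F :=
  match x with None => None | Some c => Some (c ^+ (qF - 2)) end.

Definition invP (x : P1 F) : P1 F :=
  match x with
  | None => Some 0
  | Some c => if c == 0 then None else Some c^-1
  end.

(* action of the degree-one rational function (a x + b)/(c x + d), ad - bc != 0 *)
Definition mobius (a b c d : F) (x : P1 F) : P1 F :=
  match x with
  | None => if c == 0 then None else Some (a / c)
  | Some t => if c * t + d == 0 then None else Some ((a * t + b) / (c * t + d))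
  end.

Definition Phi (e : seq F) : seq F :=
  match e with
  | [::] => [::]
  | e1 :: es => [seq (ei - e1) ^+ (qF - 2) | ei <- es]
  end.

(* G(b_1..b_k) = (a_1..a_k), a_{i+1} = first entry of Phi^i(b) (0-based i) *)
Definition Gmap (b : seq F) : seq F :=
  mkseq (fun i => head 0 (iter i Phi b)) (size b).

Definition lhs_perm (b : seq F) : P1 F -> P1 F :=
  foldr (fun bi f => transpInf bi \o f) id b.

Definition mu (a : seq F) : P1 F -> P1 F :=
  foldr (fun ai f => addP ai \o invP \o f) id a.

Definition rhs_tail (a : seq F) : P1 F -> P1 F :=
  foldl (fun f ai => (powq2 \o subP ai) \o f) id a.

End Defs.

From HB Require Import structures.
From mathcomp Require Import all_boot all_order all_algebra.
From mathcomp Require Import finfield ring.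
Import GRing.Theory.
Local Open Scope ring_scope.

(* Since q > 2, the power map x^(q-2) is field inversion extended
   by 0 |-> 0, so on P^1 it fixes oo and inverts every nonzero point.  Two
   facts about a single transposition then drive everything:
   - (b, oo) = (x + b) o x^{-1} o x^(q-2) o (x - b)  (direct case check);
   - conjugating (e, oo) by x^(q-2) o (x - b) gives ((e - b)^(q-2), oo).
   Peeling the first transposition (b_1, oo) off the left-hand side and moving
   the map x^(q-2) o (x - b_1) past the remaining transpositions turns them into
   the transpositions attached to Phi_k(b); since G(b) = b_1 :: G(Phi_k b), an
   induction on k proves the factorisation.  For the second claim, each step
   (x + a) o x^{-1} of mu sends a Moebius map with matrix [A B; C D] to the
   Moebius map with matrix [C + aA, D + aB; A, B], whose determinant is minus
   the old one; induction from the identity shows mu is a degree-one map. *)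

Section MoebiusStep.
Variable F : finFieldType.

Lemma addP_invP_mobius (a A B C D : F) (x : P1 F) :
  A * D - B * C != 0 ->
  addP a (invP (mobius A B C D x)) = mobius (C + a * A) (D + a * B) A B x.
Proof.
move=> det.
have nzA_of_C0 : C = 0 -> A != 0.
  by move=> C0; apply: contra det => /eqP A0; rewrite A0 C0; apply/eqP; ring.
have nzAB_of_CD0 t : C * t + D = 0 -> A * t + B != 0.
  move=> h1; apply: contra det => /eqP h2.
  have -> : D = - (C * t) by apply/eqP; rewrite -addr_eq0 addrC h1.
  have -> : B = - (A * t) by apply/eqP; rewrite -addr_eq0 addrC h2.
  by apply/eqP; ring.
case: x => [t|] /=.
- have -> : (C + a * A) * t + (D + a * B) = (C * t + D) + a * (A * t + B) by ring.
  have [h|h] := eqVneq (C * t + D) 0.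
    have nzAB := nzAB_of_CD0 t h.
    by rewrite h /= (negbTE nzAB) !add0r mulfK.
  rewrite /= mulf_eq0 invr_eq0 (negbTE h) orbF.
  have [//|h2] := eqVneq (A * t + B) 0.
  by rewrite /= invf_div; congr Some; rewrite [RHS]mulrDl mulfK.
- have [h|h] := eqVneq C 0.
    have nzA := nzA_of_C0 h.
    by rewrite /= (negbTE nzA) h !add0r mulfK.
  rewrite /= mulf_eq0 invr_eq0 (negbTE h) orbF.
  have [//|h2] := eqVneq A 0.
  by rewrite /= invf_div; congr Some; rewrite [RHS]mulrDl mulfK.
Qed.

Lemma mu_mobius (a : seq F) : exists A B C D : F, A * D - B * C != 0 /\
  forall x : P1 F, mu a x = mobius A B C D x.
Proof.
elim: a => [|a s [A [B [C [D [det IH]]]]]].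
  exists 1, 0, 0, 1; split; first by rewrite mulr1 mul0r subr0 oner_eq0.
  by case=> [t|] //=; rewrite !(mul0r, add0r, mul1r, addr0, divr1, oner_eq0, eqxx).
exists (C + a * A), (D + a * B), A, B; split.
  have -> : (C + a * A) * B - (D + a * B) * A = - (A * D - B * C) by ring.
  by rewrite oppr_eq0.
by move=> x; rewrite /= IH addP_invP_mobius.
Qed.

End MoebiusStep.

Section Factorisation.
Variable F : finFieldType.
Hypothesis card_gt2 : (2 < #|F|)%N.

(* For q > 2, u^(q-2) = u^{-1} in F, including u = 0 (where both sides are 0). *)
Lemma expr_card_sub2 (u : F) : u ^+ (qF F - 2) = u^-1.
Proof.
have n_gt0 : (0 < qF F - 2)%N by rewrite /qF; case: #|F| card_gt2 => [|[|[|m]]].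
have [->|u_nz] := eqVneq u 0; first by rewrite expr0n eqn0Ngt n_gt0 invr0.
do 2 apply: (mulIf u_nz).
by rewrite mulVf // mul1r -mulrA -expr2 -exprD subnK ?expf_card // ltnW.
Qed.

Lemma transpInf_factor (b : F) (y : P1 F) :
  transpInf b y = addP b (invP (powq2 (subP b y))).
Proof.
case: y => [c|] /=; last by rewrite add0r.
rewrite expr_card_sub2.
have [->|ne] := eqVneq c b; first by rewrite subrr invr0 eqxx.
have nz : c - b != 0 by rewrite subr_eq0.
by rewrite invr_eq0 (negbTE nz) invrK /= subrK.
Qed.

Lemma transpInf_conj (b e : F) (y : P1 F) :
  powq2 (subP b (transpInf e y))
  = transpInf ((e - b) ^+ (qF F - 2)) (powq2 (subP b y)).
Proof.
case: y => [c|] //=; rewrite !expr_card_sub2.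
have [->|ne] := eqVneq c e; first by rewrite eqxx.
by rewrite /= expr_card_sub2 (inj_eq invr_inj) (can_eq (subrK b)) (negbTE ne).
Qed.

Lemma lhs_perm_conj (b : F) (s : seq F) (y : P1 F) :
  powq2 (subP b (lhs_perm s y)) = lhs_perm (Phi (b :: s)) (powq2 (subP b y)).
Proof. by elim: s => [|e s IH] //=; rewrite transpInf_conj IH. Qed.

Lemma Gmap_cons (b : F) (s : seq F) :
  Gmap (b :: s) = b :: Gmap (Phi (b :: s)).
Proof.
rewrite /Gmap /mkseq /= size_map -add1n iotaDl -map_comp.
by congr (_ :: _); apply: eq_map => i /=; rewrite add0n -iterS iterSr.
Qed.

Lemma rhs_tail_cons (a : F) (s : seq F) (x : P1 F) :
  rhs_tail (a :: s) x = rhs_tail s (powq2 (subP a x)).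
Proof.
have foldl_shift (f : P1 F -> P1 F) y :
    foldl (fun g c => (@powq2 F \o @subP F c) \o g) f s y = rhs_tail s (f y).
  rewrite /rhs_tail; elim: s f y => [|c t IH] f y //=.
  by rewrite IH [in RHS]IH.
exact: foldl_shift.
Qed.

(* The first claim of the theorem, by induction on k: strong enough because
   Phi(b) is one entry shorter than b. *)
Lemma lhs_perm_factor (b : seq F) (x : P1 F) :
  lhs_perm b x = mu (Gmap b) (rhs_tail (Gmap b) x).
Proof.
move: {2}(size b) (erefl (size b)) => n; elim: n b x => [|n IH] [|b s] x // [hs].
rewrite Gmap_cons rhs_tail_cons /= -IH ?size_map //.
by rewrite -lhs_perm_conj transpInf_factor.
Qed.

End Factorisation.

Theorem theorem3p3 (F : finFieldType) (b : seq F) :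
  (2 < #|F|)%N -> (0 < size b)%N ->
  (forall x : P1 F, lhs_perm b x = (mu (Gmap b) \o rhs_tail (Gmap b)) x) /\
  (exists a0 b0 c0 d0 : F, a0 * d0 - b0 * c0 != 0 /\
     forall x : P1 F, mu (Gmap b) x = mobius a0 b0 c0 d0 x).
Proof.
move=> card_gt2 _; split.
- by move=> x; exact: lhs_perm_factor.
- exact: mu_mobius.
Qed.
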